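(* Let $\mathcal{X}$ be a finite set and $\underline{T}$ a lower transition operator on $\mathcal{L}(\mathcal{X})$. Let $\mathcal{X}'_{\mathrm{RA}}\coloneqq\{x\in\mathcal{X}\colon\exists n\in\mathbb{N}\ \forall k\ge n,\ \min\overline{T}^k\mathbb{I}_x>0\}$. Then $\underline{T}$ is regularly absorbing if and only if $\mathcal{X}'_{\mathrm{RA}}\neq\emptyset$ and for every $x\in\mathcal{X}\setminus\mathcal{X}'_{\mathrm{RA}}$ there is $n\in\mathbb{N}$ with $\overline{T}^n\mathbb{I}_{\mathcal{X}\setminus\mathcal{X}'_{\mathrm{RA}}}(x)<1$. Furthermore, $\mathcal{X}'_{\mathrm{RA}}=\mathcal{X}_{\mathrm{RA}}$.
   Context: $\mathcal{L}(\mathcal{X})$ is the set of real-valued functions on $\mathcal{X}$ with pointwise operations and order, real constants identified with constant functions, $\mathbb{I}_A$ the indicator of $A\subseteq\mathcal{X}$, $\mathbb{I}_x\coloneqq\mathbb{I}_{\{x\}}$; $\mathbb{N}=\{1,2,\dots\}$. A lower transition operator is a map $\underline{T}\colon\mathcal{L}(\mathcal{X})\to\mathcal{L}(\mathcal{X})$ such that for all $f,g$ and $\lambda\ge0$: $\underline{T}f\ge\min f$; $\underline{T}(f+g)\ge\underline{T}f+\underline{T}g$; $\underline{T}(\lambda f)=\lambda\underline{T}f$. Its upper transition operator is $\overline{T}f\coloneqq-\underline{T}(-f)$; powers denote composition. $\mathcal{X}_{\mathrm{RA}}\coloneqq\{x\in\mathcal{X}\colon\exists n\in\mathbb{N},\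 \min\overline{T}^n\mathbb{I}_x>0\}$, and $\underline{T}$ is regularly absorbing if $\mathcal{X}_{\mathrm{RA}}\ne\emptyset$ and for every $x\in\mathcal{X}\setminus\mathcal{X}_{\mathrm{RA}}$ there is $n\in\mathbb{N}$ with $\underline{T}^n\mathbb{I}_{\mathcal{X}_{\mathrm{RA}}}(x)>0$. *)

From mathcomp Require Import all_boot all_order all_algebra.
From mathcomp Require Import boolp.
Set Implicit Arguments. Unset Strict Implicit. Unset Printing Implicit Defensive.
Import Order.TTheory GRing.Theory Num.Theory.
Local Open Scope ring_scope.

Definition gamble (X : finType) (R : realFieldType) := X -> R.

Definition ind (X : finType) (R : realFieldType) (A : pred X) : X -> R :=
  fun x => if x \in A then 1 else 0.

Definition fmin (X : finType) (R : realFieldType) (x0 : X) (f : X -> R) : R :=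
  \big[Order.min/f x0]_(x : X) f x.

Definition lower_transition (X : finType) (R : realFieldType) (x0 : X)
    (T : (X -> R) -> (X -> R)) : Prop :=
  [/\ (forall f x, fmin x0 f <= T f x),
      (forall f g x, T f x + T g x <= T (fun y => f y + g y) x) &
      (forall (l : R) f x, 0 <= l -> T (fun y => l * f y) x = l * T f x)].

Definition upper (X : finType) (R : realFieldType)
    (T : (X -> R) -> (X -> R)) : (X -> R) -> (X -> R) :=
  fun f x => - T (fun y => - f y) x.

Definition opow (X : finType) (R : realFieldType)
    (T : (X -> R) -> (X -> R)) (n : nat) : (X -> R) -> (X -> R) := iter n T.

Definition XRA (X : finType) (R : realFieldType) (x0 : X)
    (T : (X -> R) -> (X -> R)) : pred X :=
  fun x => `[< exists n : nat, (0 < n)%N /\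
              0 < fmin x0 (opow (upper T) n (ind R (pred1 x))) >].

Definition XRA' (X : finType) (R : realFieldType) (x0 : X)
    (T : (X -> R) -> (X -> R)) : pred X :=
  fun x => `[< exists n : nat, (0 < n)%N /\ forall k, (n <= k)%N ->
              0 < fmin x0 (opow (upper T) k (ind R (pred1 x))) >].

Definition regularly_absorbing (X : finType) (R : realFieldType) (x0 : X)
    (T : (X -> R) -> (X -> R)) : Prop :=
  (exists x, x \in XRA x0 T) /\
  (forall x, x \notin XRA x0 T ->
     exists n : nat, (0 < n)%N /\ 0 < opow T n (ind R (XRA x0 T)) x).

From mathcomp Require Import all_boot all_order all_algebra.
From mathcomp Require Import boolp.
From mathcomp Require Import lra.
Import Order.TTheory GRing.Theory Num.Theory.
Local Open Scope ring_scope.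

(* A lower transition operator commutes with adding constants, so
   [T^n I_A = 1 - Tbar^n I_(~A)]: positivity of the lower probability of
   reaching [A] is the upper probability of staying in [~A] being below 1.
   Moreover [min Tbar g >= min g], so [min Tbar^k I_x] is nondecreasing in
   [k]; once positive it stays positive, hence [X'_RA = X_RA]. *)

Lemma fmin_ge (X : finType) (R : realFieldType) (x0 : X) (f : X -> R) c :
  (forall y, c <= f y) -> c <= fmin x0 f.
Proof.
move=> le_cf; apply: (big_ind (fun v => c <= v)) => // a b le_ca le_cb.
by rewrite le_min le_ca le_cb.
Qed.

Lemma opow_upper (X : finType) (R : realFieldType) (T : (X -> R) -> (X -> R)) n g :
  opow (upper T) n g = fun x => - opow T n (fun y => - g y) x.
Proof.
elim: n => [|n IHn] /=; first by apply: funext => y; rewrite opprK.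
rewrite /opow /= -/(opow _ _ _) IHn /upper; apply: funext => x.
by congr (- T _ x); apply: funext => y; rewrite opprK.
Qed.

Section LowerTransition.

Context {X : finType} {R : realFieldType} {x0 : X} {T : (X -> R) -> (X -> R)}.
Hypothesis lowerT : lower_transition x0 T.

Lemma lower_transition0 x : T (fun _ => 0) x = 0.
Proof.
have [_ _ homT] := lowerT.
have := homT 0 (fun _ => 0) x (lexx 0).
have -> : (fun y : X => 0 * (fun _ => 0 : R) y) = (fun _ => 0).
  by apply: funext => y; rewrite mul0r.
by rewrite mul0r.
Qed.

Lemma lower_transitionDc f c x : T (fun y => f y + c) x = T f x + c.
Proof.
have [minT superT _] := lowerT.
have le_cT d : d <= T (fun _ => d) x by apply: le_trans (minT _ _); apply: fmin_ge.
apply/eqP; rewrite eq_le; apply/andP; split; last first.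
  by apply: le_trans (superT _ _ _); rewrite lerD2l.
have := superT (fun y => f y + c) (fun _ => - c) x.
have -> : (fun y => f y + c + - c) = f by apply: funext => y; rewrite addrK.
by have := le_cT (- c); lra.
Qed.

Lemma opowDc n f c : opow T n (fun y => f y + c) = fun y => opow T n f y + c.
Proof.
elim: n => [|n IHn] //=.
by rewrite /opow /= -!/(opow _ _ _) IHn; apply: funext => x; rewrite lower_transitionDc.
Qed.

Lemma fmin_le_upper g x : fmin x0 g <= upper T g x.
Proof.
have [minT superT _] := lowerT.
apply: le_trans (minT g x) _; rewrite /upper.
have := superT g (fun y => - g y) x.
have -> : (fun y => g y + - g y) = (fun _ => 0) by apply: funext => y; rewrite subrr.
by rewrite lower_transition0; lra.
Qed.

Lemma fmin_opow_upper_monotone n k g : (n <= k)%N ->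
  fmin x0 (opow (upper T) n g) <= fmin x0 (opow (upper T) k g).
Proof.
move=> /subnK <-; rewrite /opow iterD.
elim: (k - n)%N => [|m IHm] //=.
by apply: le_trans IHm _; apply: fmin_ge => y; apply: fmin_le_upper.
Qed.

Lemma opow_ind_gt0_upperC n (A : pred X) x :
  (0 < opow T n (ind R A) x) <-> (opow (upper T) n (ind R (predC A)) x < 1).
Proof.
have -> : ind R A = fun y => - ind R (predC A) y + 1.
  apply: funext => y; rewrite /ind -[y \in A]/(A y) inE /=.
  by case: (A y) => /=; lra.
by rewrite opowDc opow_upper /=; split; lra.
Qed.

Lemma XRA'E : XRA' x0 T = XRA x0 T.
Proof.
apply: funext => x; apply/asboolP/asboolP => -[n [n_gt0 min_gt0]].
  by exists n; split => //; apply: min_gt0.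
exists n; split => // k le_nk.
exact: lt_le_trans min_gt0 (fmin_opow_upper_monotone _ _ _ le_nk).
Qed.

End LowerTransition.

Theorem lemma1 (X : finType) (R : realFieldType) (x0 : X)
    (T : (X -> R) -> (X -> R)) :
  lower_transition x0 T ->
  (regularly_absorbing x0 T <->
     ((exists x, x \in XRA' x0 T) /\
      (forall x, x \notin XRA' x0 T ->
         exists n : nat, (0 < n)%N /\
           opow (upper T) n (ind R (predC (XRA' x0 T))) x < 1)))
  /\ XRA' x0 T =i XRA x0 T.
Proof.
move=> lowerT; rewrite (XRA'E lowerT); split=> //.
split=> -[nonempty absorbing]; split=> // x /absorbing [n [n_gt0]];
  by move=> /(opow_ind_gt0_upperC lowerT); exists n.
Qed.
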